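(* Let $U=\sum_{k=0}^rB_kE_2^k$ be a quasiautomorphic form of weight $w$ and depth $r$ for $\mathfrak{t}_\mu$. Then for every $0\le n\le r$ and all $z\in\mathbb{H}$, $$\frac{1}{z^{w-r}}\sum_{\ell=0}^{n}\binom{n}{\ell}g_\ell(Sz)\,(Sz)^{n-\ell}=(-1)^n\sum_{m=0}^{r-n}\binom{r-n}{m}g_m(z)\,z^{r-n-m},$$ where $Sz=-1/z$; equivalently $f_n(Sz)/z^{w-r}=(-1)^nf_{r-n}(z)$.
   Context: Let $\mu\ge 3$, $\varpi_\mu=2\cos(\pi/\mu)$, $T=\begin{pmatrix}1&\varpi_\mu\\0&1\end{pmatrix}$, $S=\begin{pmatrix}0&-1\\1&0\end{pmatrix}$, $\mathfrak{t}_\mu\subset\mathrm{SL}_2(\mathbb{R})$ generated by $T,S$. $\mathcal{A}_v(\mathfrak{t}_\mu)$ ($v$ even) is the space of holomorphic $f$ on $\mathbb{H}$ with $f(\gamma z)=(cz+d)^vf(z)$ for $\gamma\in\mathfrak{t}_\mu$, holomorphic at $i\infty$. $E_2$ is holomorphic on $\mathbb{H}$ with $E_2(Tz)=E_2(z)$, $E_2(Sz)/z^2=E_2(z)+C/z$, $C=\mathrm{lcm}(2,\mu)/(\pi i)$. A quasiautomorphic form of even weight $w$, depth $0\le r\le w/2$ is $U=\sum_{k=0}^rB_kE_2^k$ with $B_k\in\mathcal{A}_{w-2k}(\mathfrak{t}_\mu)$. With $\{r,\ell\}_m=\frac{(r-\ell)!(m+\ell)!}{r!\,m!}$, $g_\ell=C^\ell\sum_{m=0}^{r-\ell}\{r,\ell\}_mB_{\ell+m}E_2^m$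 for $0\le\ell\le r$, and $f_n(z)=\sum_{k=0}^n\binom{n}{k}g_k(z)z^{n-k}$ for $0\le n\le r$. *)

From Stdlib Require Import Reals Arith.
From Coquelicot Require Import Coquelicot.

Open Scope R_scope.

(* A 2x2 real matrix (a, b, c, d) = [[a, b], [c, d]]. *)
Definition mat := (R * R * R * R)%type.

Definition matmul (g h : mat) : mat :=
  let '(a, b, c, d) := g in
  let '(a', b', c', d') := h in
  (a * a' + b * c', a * b' + b * d', c * a' + d * c', c * b' + d * d').

(* inverse of a determinant-one matrix *)
Definition matinv1 (g : mat) : mat :=
  let '(a, b, c, d) := g in (d, - b, - c, a).

Definition varpi (mu : nat) : R := 2 * cos (PI / INR mu).

Definition Tmat (mu : nat) : mat := (1, varpi mu, 0, 1).
Definition Smat : mat := (0, -1, 1, 0).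

Inductive in_hecke (mu : nat) : mat -> Prop :=
| hecke_T : in_hecke mu (Tmat mu)
| hecke_S : in_hecke mu Smat
| hecke_mul : forall g h, in_hecke mu g -> in_hecke mu h -> in_hecke mu (matmul g h)
| hecke_inv : forall g, in_hecke mu g -> in_hecke mu (matinv1 g).

Open Scope C_scope.

Definition mob (g : mat) (z : C) : C :=
  let '(a, b, c, d) := g in (RtoC a * z + RtoC b) / (RtoC c * z + RtoC d).
Definition jfac (g : mat) (z : C) : C :=
  let '(a, b, c, d) := g in RtoC c * z + RtoC d.

Definition in_H (z : C) : Prop := (0 < Im z)%R.

Definition holo_H (f : C -> C) : Prop :=
  forall z : C, in_H z -> ex_derive (K := C_AbsRing) (V := C_NormedModule) f z.

(* holomorphic at i*infinity: bounded as Im z -> +infinity *)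
Definition holo_at_infty (f : C -> C) : Prop :=
  exists M c : R, forall z : C, (c < Im z)%R -> (Cmod (f z) <= M)%R.

Definition automorphic (mu v : nat) (f : C -> C) : Prop :=
  holo_H f /\
  (forall g, in_hecke mu g -> forall z, in_H z -> f (mob g z) = (jfac g z) ^ v * f z) /\
  holo_at_infty f.

Definition Cconst (mu : nat) : C := RtoC (INR (Nat.lcm 2 mu)) / (RtoC PI * Ci).

Definition E2_spec (mu : nat) (E2 : C -> C) : Prop :=
  holo_H E2 /\
  (forall z, in_H z -> E2 (mob (Tmat mu) z) = E2 z) /\
  (forall z, in_H z -> E2 (mob Smat z) / z ^ 2 = E2 z + Cconst mu / z).

(* real binomial coefficient n choose k (for k <= n) *)
Definition binomC (n k : nat) : C :=
  RtoC (INR (fact n) / (INR (fact k) * INR (fact (n - k))))%R.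

Definition brace (r l m : nat) : C :=
  RtoC (INR (fact (r - l) * fact (m + l)) / INR (fact r * fact m))%R.

Definition gfun (mu : nat) (E2 : C -> C) (B : nat -> C -> C) (r l : nat) (z : C) : C :=
  (Cconst mu) ^ l *
  sum_n (fun m => brace r l m * B (l + m)%nat z * (E2 z) ^ m) (r - l).

Definition ffun (mu : nat) (E2 : C -> C) (B : nat -> C -> C) (r n : nat) (z : C) : C :=
  sum_n (fun k => binomC n k * gfun mu E2 B r k z * z ^ (n - k)) n.

From Stdlib Require Import Reals Arith Lia Lra.
From Coquelicot Require Import Coquelicot.
From mathcomp Require binomial.
Open Scope C_scope.

(* Under S each B_k picks up z^(w-2k) and E_2 becomes z (z E_2 + C).  Collecting the terms of
   both sides by K = l + m, the coefficient of B_K(z) is (-1)^n z^(r-n-K) / binom(r,n) times a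
   polynomial in u = z E_2(z) and c = C, because
     binom(n,l) {r,l}_(K-l) binom(r,n) = binom(K,l) binom(r-l,r-n).
   With N = r - n the two polynomials are
     sum_l binom(K,l) (-c)^l binom(r-l,N) (u+c)^(K-l)  and
     sum_m binom(K,m) binom(r-m,r-N) c^m u^(K-m);
   both are the coefficient of x^N in (1+x)^(r-K) (u + x(u+c))^K, and they are identified by
   induction on K through Pascal's rule. *)

Lemma leq_of_le {m n : nat} : (m <= n)%nat -> is_true (ssrnat.leq m n).
Proof. exact (ssrbool.introT ssrnat.leP). Qed.

Lemma factorial_fact (n : nat) : ssrnat.factorial n = fact n.
Proof. induction n as [|n IH]; [reflexivity|]. rewrite ssrnat.factE, IH. reflexivity. Qed.

(* Unlike [binomC], which is a junk value for [k > n], [binom n k] vanishes there,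
   so that sums of terms carrying a factor [binom n k] can be extended at will. *)
Definition binom (n k : nat) : C := INR (binomial.binomial n k).

Lemma binom_small (n k : nat) : (n < k)%nat -> binom n k = 0.
Proof. intro H. unfold binom. rewrite binomial.bin_small by exact (leq_of_le H). reflexivity. Qed.

Lemma binom0 (n : nat) : binom n 0 = 1.
Proof. unfold binom. rewrite binomial.bin0. reflexivity. Qed.

Lemma binomS (n k : nat) : binom (S n) (S k) = binom n k + binom n (S k).
Proof. unfold binom. rewrite binomial.binS, <- ssrnat.plusE, plus_INR, RtoC_plus. ring. Qed.

Lemma binomC_binom (n k : nat) : (k <= n)%nat -> binomC n k = binom n k.
Proof.
  intro H. unfold binomC, binom. f_equal.
  rewrite <- (factorial_fact n), <- (binomial.bin_fact (leq_of_le H)), <- !ssrnat.multE,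
    <- ssrnat.minusE, !factorial_fact, !mult_INR.
  field. split; apply INR_fact_neq_0.
Qed.

Lemma binom_neq0 (n k : nat) : (k <= n)%nat -> binom n k <> 0.
Proof.
  intros H E. rewrite <- binomC_binom in E by exact H. apply RtoC_inj in E.
  revert E. apply Rgt_not_eq, Rdiv_lt_0_compat; [|apply Rmult_lt_0_compat];
    apply INR_fact_lt_0.
Qed.

Lemma binom_sub (n k : nat) : (k <= n)%nat -> binom n (n - k) = binom n k.
Proof.
  intro H. unfold binom.
  exact (f_equal (fun m => RtoC (INR m)) (binomial.bin_sub (leq_of_le H))).
Qed.

(* [ring] reads the carrier off the type of [sum_n f n], which is the [AbelianMonoid]
   sort rather than [C]; sums are therefore abstracted as atoms of type [C] first. *)
Ltac ring_sums :=
  repeat match goal with |- context [sum_n ?f ?n] =>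
    let s := fresh "s" in generalize (sum_n f n : C); intro s end;
  ring.

(* Coquelicot states these for an abstract [AbelianMonoid]; restated over [C] they rewrite
   terms built from [Cplus] and [Cmult]. *)
Lemma sum_n_Cext (f g : nat -> C) (n : nat) :
  (forall k, (k <= n)%nat -> f k = g k) -> (sum_n f n : C) = sum_n g n.
Proof. exact (sum_n_ext_loc f g n). Qed.

Lemma sum_n_Cmult_l (a : C) (f : nat -> C) (n : nat) :
  sum_n (fun k => a * f k) n = a * sum_n f n.
Proof. exact (sum_n_mult_l a f n). Qed.

Lemma sum_n_Cplus (f g : nat -> C) (n : nat) :
  sum_n (fun k => f k + g k) n = sum_n f n + sum_n g n.
Proof. exact (sum_n_plus f g n). Qed.

Lemma sum_n_CSn (f : nat -> C) (n : nat) : (sum_n f (S n) : C) = sum_n f n + f (S n).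
Proof. exact (sum_Sn f n). Qed.

Lemma sum_n_shift (f : nat -> C) (n : nat) :
  (sum_n f (S n) : C) = f O + sum_n (fun k => f (S k)) n.
Proof.
  induction n as [|n IH].
  - rewrite sum_n_CSn, !sum_O. reflexivity.
  - rewrite sum_n_CSn, IH, (sum_n_CSn (fun k => f (S k))). ring_sums.
Qed.

Lemma sum_n_extend (f : nat -> C) (a b : nat) : (a <= b)%nat ->
  (forall k, (a < k <= b)%nat -> f k = 0) -> (sum_n f b : C) = sum_n f a.
Proof.
  intros Hab Hf. induction b as [|b IH].
  - replace a with O by lia. reflexivity.
  - destruct (Nat.eq_dec a (S b)) as [->|Hne]; [reflexivity|].
    rewrite sum_n_CSn, IH, (Hf (S b)) by (intros; try apply Hf; lia). ring_sums.
Qed.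

Lemma sum_n_cut (f : nat -> C) (a b : nat) :
  (forall k, (a < k <= b)%nat -> f k = 0) -> (forall k, (b < k <= a)%nat -> f k = 0) ->
  sum_n f a = sum_n f b.
Proof.
  intros Hab Hba. destruct (Nat.le_ge_cases a b).
  - symmetry. apply sum_n_extend; assumption.
  - apply sum_n_extend; assumption.
Qed.

Lemma sum_n_shift_index (f : nat -> C) (l r : nat) : (l <= r)%nat ->
  (forall k, (k < l)%nat -> f k = 0) ->
  (sum_n (fun m => f (l + m)%nat) (r - l) : C) = sum_n f r.
Proof.
  revert f r. induction l as [|l IH]; intros f r Hlr Hf.
  - rewrite Nat.sub_0_r. reflexivity.
  - destruct r as [|r]; [lia|].
    rewrite sum_n_shift, (Hf O), <- (IH (fun k => f (S k))) by (intros; try apply Hf; lia).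
    rewrite Cplus_0_l. reflexivity.
Qed.

Lemma sum_n_triangle (F G : nat -> nat -> C) (n r : nat) : (n <= r)%nat ->
  (forall l K, (l <= n)%nat -> (l <= K <= r)%nat -> F l (K - l)%nat = G l K) ->
  (forall l K, (K < l)%nat -> G l K = 0) ->
  sum_n (fun l => sum_n (F l) (r - l)) n = sum_n (fun K => sum_n (fun l => G l K) n) r.
Proof.
  intros Hnr HFG HG. rewrite sum_n_switch.
  apply sum_n_Cext. intros l Hl.
  transitivity (sum_n (fun m => G l (l + m)%nat) (r - l)).
  - apply sum_n_Cext. intros m Hm.
    rewrite <- HFG by lia. f_equal. lia.
  - apply (sum_n_shift_index (G l)); auto; lia.
Qed.

Lemma sum_n_binom_pascal (F : nat -> C) (K : nat) :
  (sum_n (fun l => binom (S K) l * F l) (S K) : C)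
  = sum_n (fun l => binom K l * F l) K + sum_n (fun l => binom K l * F (S l)) K.
Proof.
  rewrite <- (sum_n_extend (fun l => binom K l * F l) K (S K))
    by (auto; intros l Hl; rewrite binom_small by lia; ring).
  rewrite !sum_n_shift, !binom0.
  rewrite (sum_n_Cext _ (fun l => binom K l * F (S l) + binom K (S l) * F (S l)))
    by (intros; rewrite binomS; ring).
  rewrite sum_n_Cplus. ring_sums.
Qed.

Section BinomialExchange.

Variables u c : C.

Definition shifted_sum (K r N : nat) : C :=
  sum_n (fun l => binom K l * ((-1) ^ l * binom (r - l) N * c ^ l * (u + c) ^ (K - l))) K.

Definition plain_sum (K r p : nat) : C :=
  sum_n (fun m => binom K m * (binom (r - m) p * c ^ m * u ^ (K - m))) K.

Lemma shifted_sum_succ (K r N : nat) :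
  shifted_sum (S K) (S r) N = (u + c) * shifted_sum K (S r) N + (- c) * shifted_sum K r N.
Proof.
  unfold shifted_sum. rewrite sum_n_binom_pascal, <- !sum_n_Cmult_l.
  f_equal; apply sum_n_Cext; intros l Hl.
  - rewrite (Nat.sub_succ_l l K) by exact Hl. cbn [Cpow]. ring.
  - cbn [Cpow Nat.sub]. ring.
Qed.

Lemma plain_sum_succ (K r p : nat) :
  plain_sum (S K) (S r) p = u * plain_sum K (S r) p + c * plain_sum K r p.
Proof.
  unfold plain_sum. rewrite sum_n_binom_pascal, <- !sum_n_Cmult_l.
  f_equal; apply sum_n_Cext; intros m Hm.
  - rewrite (Nat.sub_succ_l m K) by exact Hm. cbn [Cpow]. ring.
  - cbn [Cpow Nat.sub]. ring.
Qed.

Lemma shifted_sum_pascal (K r N : nat) : (K <= r)%nat ->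
  shifted_sum K (S r) (S N) = shifted_sum K r (S N) + shifted_sum K r N.
Proof.
  intro HK. unfold shifted_sum. rewrite <- sum_n_Cplus. apply sum_n_Cext. intros l Hl.
  rewrite Nat.sub_succ_l, binomS by lia. ring.
Qed.

Lemma shifted_sum_index0 (K r : nat) : shifted_sum K (S r) 0 = shifted_sum K r 0.
Proof. unfold shifted_sum. apply sum_n_Cext. intros l _. rewrite !binom0. reflexivity. Qed.

Lemma plain_sum_large_index (K r : nat) : plain_sum K r (S r) = 0.
Proof.
  unfold plain_sum.
  rewrite <- (Cmult_0_l (sum_n (fun m => binom K m * (c ^ m * u ^ (K - m))) K)), <- sum_n_Cmult_l.
  apply sum_n_Cext. intros m _. rewrite (binom_small (r - m)) by lia. ring.
Qed.

Lemma shifted_sum_eq_plain_sum (K r N : nat) : (K <= r)%nat -> (N <= r)%nat ->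
  shifted_sum K r N = plain_sum K r (r - N).
Proof.
  revert r N. induction K as [|K IH]; intros r N HK HN.
  - unfold shifted_sum, plain_sum. rewrite !sum_O, Nat.sub_0_r, binom_sub by exact HN.
    simpl. ring.
  - destruct r as [|r]; [lia|].
    rewrite shifted_sum_succ, plain_sum_succ, <- (IH (S r) N) by lia.
    destruct N as [|N].
    + rewrite shifted_sum_index0, Nat.sub_0_r, plain_sum_large_index. ring.
    + change (S r - S N)%nat with (r - N)%nat.
      rewrite <- (IH r N), shifted_sum_pascal by lia. ring.
Qed.

End BinomialExchange.

Lemma in_H_neq0 (z : C) : in_H z -> z <> 0.
Proof. intros Hz E. subst z. unfold in_H in Hz. simpl in Hz. lra. Qed.

Lemma mob_S (z : C) : z <> 0 -> mob Smat z = - / z.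
Proof. intro Hz. unfold mob, Smat. field. exact Hz. Qed.

Lemma automorphic_S (mu v : nat) (f : C -> C) (z : C) :
  automorphic mu v f -> in_H z -> f (- / z) = z ^ v * f z.
Proof.
  intros [_ [Hf _]] Hz.
  rewrite <- (mob_S z (in_H_neq0 z Hz)), (Hf Smat (hecke_S mu) z Hz).
  unfold jfac, Smat. replace (1 * z + 0) with z by ring. reflexivity.
Qed.

Lemma E2_S (mu : nat) (E2 : C -> C) (z : C) :
  E2_spec mu E2 -> in_H z -> E2 (- / z) = z * (z * E2 z + Cconst mu).
Proof.
  intros [_ [_ HS]] Hz. pose proof (in_H_neq0 z Hz) as Hz0.
  pose proof (HS z Hz) as H. rewrite (mob_S z Hz0) in H.
  replace (E2 (- / z)) with (E2 (- / z) / z ^ 2 * z ^ 2) by (field; exact Hz0).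
  rewrite H. simpl. field. exact Hz0.
Qed.

Lemma Cpow_sub_r (z : C) (a b : nat) : z <> 0 -> (b <= a)%nat -> z ^ (a - b) = z ^ a / z ^ b.
Proof.
  intros Hz H. replace a with ((a - b) + b)%nat at 2 by lia.
  rewrite Cpow_add_r. field. apply Cpow_nz. exact Hz.
Qed.

Lemma Cpow_neg1_sub (n l : nat) : (l <= n)%nat -> (-1 : C) ^ (n - l) = (-1) ^ n * (-1) ^ l.
Proof.
  intro H. replace n with ((n - l) + l)%nat at 2 by lia.
  rewrite Cpow_add_r, <- Cmult_assoc, <- Cpow_mult_l.
  replace (-1 * -1 : C) with (1 : C) by ring. rewrite Cpow_1_l. ring.
Qed.

Lemma binomC_mul_brace (n l K r : nat) : (l <= n <= r)%nat -> (l <= K <= r)%nat ->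
  binomC n l * brace r l (K - l) * binom r n = binom K l * binom (r - l) (r - n).
Proof.
  intros Hn HK.
  rewrite <- (binomC_binom r n), <- (binomC_binom K l), <- (binomC_binom (r - l) (r - n)) by lia.
  unfold binomC, brace. rewrite <- !RtoC_mult. f_equal.
  replace (r - l - (r - n))%nat with (n - l)%nat by lia.
  replace (r - (r - n))%nat with n by lia.
  replace (K - l + l)%nat with K by lia.
  rewrite !mult_INR. field. repeat split; apply INR_fact_neq_0.
Qed.

Definition block_factor (b z : C) (r n K : nat) : C :=
  (-1) ^ n * b * z ^ r / (z ^ K * z ^ n) / binom r n.

Lemma lhs_term (z b v c : C) (w r n K l : nat) :
  z <> 0 -> (2 * r <= w)%nat -> (l <= n <= r)%nat -> (l <= K <= r)%nat ->
  / z ^ (w - r) * binomC n l * c ^ l * (- / z) ^ (n - l)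
    * (brace r l (K - l) * (z ^ (w - 2 * K) * b) * (z * v) ^ (K - l))
  = block_factor b z r n K * (binom K l * ((-1) ^ l * binom (r - l) (r - n) * c ^ l * v ^ (K - l))).
Proof.
  intros Hz Hw Hn HK. unfold block_factor.
  assert (Hbin : binomC n l <> 0) by (rewrite binomC_binom by lia; apply binom_neq0; lia).
  assert (Hbrn : binom r n <> 0) by (apply binom_neq0; lia).
  replace (brace r l (K - l)) with (binom K l * binom (r - l) (r - n) / (binomC n l * binom r n))
    by (rewrite <- (binomC_mul_brace n l K r) by lia; field; auto).
  replace (- / z) with (-1 * / z) by (field; exact Hz).
  rewrite !Cpow_mult_l, Cpow_neg1_sub, Cpow_inv by (auto; lia).
  rewrite (Cpow_sub_r z w r), (Cpow_sub_r z w (2 * K)), (Cpow_sub_r z K l), (Cpow_sub_r z n l)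
    by (auto; lia).
  replace (2 * K)%nat with (K + K)%nat by lia. rewrite Cpow_add_r.
  field. repeat split; auto; apply Cpow_nz; exact Hz.
Qed.

Lemma rhs_term (z b e c : C) (r n K m : nat) :
  z <> 0 -> (n <= r)%nat -> (m <= r - n)%nat -> (m <= K <= r)%nat ->
  (-1) ^ n * binomC (r - n) m * c ^ m * z ^ (r - n - m) * (brace r m (K - m) * b * e ^ (K - m))
  = block_factor b z r n K * (binom K m * (binom (r - m) n * c ^ m * (z * e) ^ (K - m))).
Proof.
  intros Hz Hn Hm HK. unfold block_factor.
  assert (Hbin : binomC (r - n) m <> 0) by (rewrite binomC_binom by lia; apply binom_neq0; lia).
  assert (Hbrn : binom r n <> 0) by (apply binom_neq0; lia).
  assert (Hc := binomC_mul_brace (r - n) m K r ltac:(lia) HK).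
  rewrite binom_sub in Hc by lia. replace (r - (r - n))%nat with n in Hc by lia.
  replace (brace r m (K - m)) with (binom K m * binom (r - m) n / (binomC (r - n) m * binom r n))
    by (rewrite <- Hc; field; auto).
  rewrite Cpow_mult_l.
  replace (r - n - m)%nat with (r - (n + m))%nat by lia.
  rewrite (Cpow_sub_r z r (n + m)), (Cpow_sub_r z K m), Cpow_add_r by (auto; lia).
  field. repeat split; auto; apply Cpow_nz; exact Hz.
Qed.

Lemma lhs_regroup (mu : nat) (E2 : C -> C) (B : nat -> C -> C) (w r n : nat) (z : C) :
  z <> 0 -> (2 * r <= w)%nat -> (n <= r)%nat ->
  (forall k, (k <= r)%nat -> B k (- / z) = z ^ (w - 2 * k) * B k z) ->
  E2 (- / z) = z * (z * E2 z + Cconst mu) ->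
  / z ^ (w - r) * sum_n (fun l => binomC n l * gfun mu E2 B r l (- / z) * (- / z) ^ (n - l)) n
  = sum_n (fun K =>
      block_factor (B K z) z r n K * shifted_sum (z * E2 z) (Cconst mu) K r (r - n)) r.
Proof.
  intros Hz Hw Hn HB HE. set (c := Cconst mu).
  transitivity (sum_n (fun l => sum_n (fun m =>
    / z ^ (w - r) * binomC n l * c ^ l * (- / z) ^ (n - l)
      * (brace r l m * B (l + m)%nat (- / z) * E2 (- / z) ^ m)) (r - l)) n).
  { rewrite <- sum_n_Cmult_l. apply sum_n_Cext. intros l Hl.
    unfold gfun. fold c. rewrite sum_n_Cmult_l. ring_sums. }
  set (G := fun l K => block_factor (B K z) z r n K
    * (binom K l * ((-1) ^ l * binom (r - l) (r - n) * c ^ l * (z * E2 z + c) ^ (K - l)))).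
  rewrite (sum_n_triangle _ G).
  - apply sum_n_Cext. intros K HK. unfold G. rewrite sum_n_Cmult_l. f_equal.
    apply sum_n_cut; intros l Hl.
    + rewrite (binom_small (r - l)) by lia. ring.
    + rewrite binom_small by lia. ring.
  - exact Hn.
  - intros l K Hl HK. replace (l + (K - l))%nat with K by lia.
    rewrite HB, HE by lia. apply lhs_term; auto; lia.
  - intros l K HK. unfold G. rewrite binom_small by exact HK. ring.
Qed.

Lemma rhs_regroup (mu : nat) (E2 : C -> C) (B : nat -> C -> C) (r n : nat) (z : C) :
  z <> 0 -> (n <= r)%nat ->
  (-1) ^ n * sum_n (fun m => binomC (r - n) m * gfun mu E2 B r m z * z ^ (r - n - m)) (r - n)
  = sum_n (fun K => block_factor (B K z) z r n K * plain_sum (z * E2 z) (Cconst mu) K r n) r.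
Proof.
  intros Hz Hn. set (c := Cconst mu).
  transitivity (sum_n (fun m => sum_n (fun j =>
    (-1) ^ n * binomC (r - n) m * c ^ m * z ^ (r - n - m)
      * (brace r m j * B (m + j)%nat z * E2 z ^ j)) (r - m)) (r - n)).
  { rewrite <- sum_n_Cmult_l. apply sum_n_Cext. intros m Hm.
    unfold gfun. fold c. rewrite sum_n_Cmult_l. ring_sums. }
  set (G := fun m K => block_factor (B K z) z r n K
    * (binom K m * (binom (r - m) n * c ^ m * (z * E2 z) ^ (K - m)))).
  rewrite (sum_n_triangle _ G).
  - apply sum_n_Cext. intros K HK. unfold G. rewrite sum_n_Cmult_l. f_equal.
    apply sum_n_cut; intros m Hm.
    + rewrite (binom_small (r - m)) by lia. ring.
    + rewrite binom_small by lia. ring.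
  - lia.
  - intros m K Hm HK. replace (m + (K - m))%nat with K by lia. apply rhs_term; auto; lia.
  - intros m K HK. unfold G. rewrite binom_small by exact HK. ring.
Qed.

Theorem mainTheorem8 (mu : nat) (E2 : C -> C) (w r : nat) (B : nat -> C -> C) :
  (3 <= mu)%nat ->
  E2_spec mu E2 ->
  Nat.Even w ->
  (2 * r <= w)%nat ->
  (forall k, (k <= r)%nat -> automorphic mu (w - 2 * k) (B k)) ->
  forall (n : nat) (z : C), (n <= r)%nat -> in_H z ->
    / z ^ (w - r) *
      sum_n (fun l => binomC n l * gfun mu E2 B r l (- / z) * (- / z) ^ (n - l)) n
    = (-1) ^ n *
      sum_n (fun m => binomC (r - n) m * gfun mu E2 B r m z * z ^ (r - n - m)) (r - n).
Proof.
  intros _ HE2 _ Hw HB n z Hn Hz.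
  pose proof (in_H_neq0 z Hz) as Hz0.
  assert (HBS : forall k, (k <= r)%nat -> B k (- / z) = z ^ (w - 2 * k) * B k z)
    by (intros k Hk; exact (automorphic_S mu _ _ z (HB k Hk) Hz)).
  rewrite (lhs_regroup mu E2 B w r n z Hz0 Hw Hn HBS (E2_S mu E2 z HE2 Hz)),
    (rhs_regroup mu E2 B r n z Hz0 Hn).
  apply sum_n_Cext. intros K HK.
  rewrite shifted_sum_eq_plain_sum by lia.
  replace (r - (r - n))%nat with n by lia. reflexivity.
Qed.
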